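(* Let $G = K_m \otimes K_n$ with $m \geq 3$ and $m \leq n \leq 2m-2$. Then $\dim(G) = \left\lceil \frac{2}{3}(m+n-2) \right\rceil$.
   Context: $K_r$ is the complete graph on $r$ vertices. The tensor product $G\otimes H$ has vertex set $V(G)\times V(H)$, with $(u,v)$ adjacent to $(x,y)$ iff $ux\in E(G)$ and $vy\in E(H)$. For a connected graph and an ordered set $W=\{w_1,\dots,w_k\}$ of vertices, $r(v\mid W)=(d(v,w_1),\dots,d(v,w_k))$; $W$ is resolving if distinct vertices have distinct representations; $\dim(G)$ is the minimum size of a resolving set. *)

From mathcomp Require Import all_boot.
Set Implicit Arguments. Unset Strict Implicit. Unset Printing Implicit Defensive.

Definition complete_graph (r : nat) : rel 'I_r := fun i j => i != j.

Definition tensor_graph (T U : finType) (g : rel T) (h : rel U) : rel (T * U) :=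
  fun p q => g p.1 q.1 && h p.2 q.2.

Section Dist.
Variables (T : finType) (e : rel T).

Definition walk_of_length (k : nat) (u v : T) : bool :=
  [exists p : k.-tuple T, path e u p && (last u p == v)].

(* graph distance: least k with a walk of length k from u to v
   (for connected graphs this is the usual distance; it is #|T| if v is
   unreachable, which never happens in a connected graph). *)
Definition gdist (u v : T) : nat :=
  find (fun k => walk_of_length k u v) (iota 0 #|T|).

Definition resolving (W : {set T}) : bool :=
  [forall u, forall v, [forall w in W, gdist u w == gdist v w] ==> (u == v)].

(* metric dimension: minimum size of a resolving set
   (the full vertex set is always resolving, so #|T| is a valid default). *)
Definition metric_dim : nat :=
  \big[minn/#|T|]_(W : {set T} | resolving W) #|W|.
End Dist.
Arguments complete_graph r : clear implicits.

From mathcomp Require Import all_boot order zify.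
Set Implicit Arguments. Unset Strict Implicit. Unset Printing Implicit Defensive.

(* View K_m (x) K_n as an m x n grid. Two vertices are at distance 0, 2 or 1
   according as they coincide, share a row or a column, or neither, so a set W
   resolves the graph iff it has at most one empty row, at most one empty
   column, at most one isolated point (alone in its row and its column), and
   never an isolated point together with an empty row and an empty column.

   Lower bound: each nonempty row carries at least two incidences of points of
   W, a point counting twice if it is alone in its row; summing over rows and
   columns gives 3|W| >= 2(m + n - 2).

   Upper bound: n - 1 points fill a 1 x n grid, and adding a new row holding
   two points in two new columns (or, transposed, a new column with two points
   in two new rows) preserves the four conditions at a cost of two points for
   three lines; every m <= n <= 2m - 2 is reached from a 1 x (j + 1) base with
   j <= 2 at the optimal cost. *)

Section Walks.
Variables (T : finType) (e : rel T).

Lemma walk_of_length0 u v : walk_of_length e 0 u v = (u == v).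
Proof.
apply/existsP/eqP => [[p]|->]; last by exists [tuple]; rewrite /= eqxx.
by rewrite tuple0 /= => /eqP.
Qed.

Lemma walk_of_length1 u v : walk_of_length e 1 u v = e u v.
Proof.
apply/existsP/idP => [[[[|x [|y s]] //= _]]|euv].
  by rewrite andbT => /andP[euv /eqP <-].
by exists [tuple v]; rewrite /= euv eqxx.
Qed.

Lemma walk_of_length2 u x v : e u x -> e x v -> walk_of_length e 2 u v.
Proof. by move=> eux exv; apply/existsP; exists [tuple x; v]; rewrite /= eux exv eqxx. Qed.

End Walks.

Lemma exists_neq2 (T : finType) (a b : T) : 2 < #|T| -> exists c, (c != a) && (c != b).
Proof.
move=> T_gt2; have : 0 < #|~: [set a; b]|.
  by move: T_gt2; rewrite -(cardsC [set a; b]) cards2; case: (a != b); lia.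
by case/card_gt0P => c; rewrite !inE negb_or; exists c.
Qed.

Section Grid.
Variables (T U : finType).
Implicit Types (u v w : T * U) (W : {set T * U}).

Definition same_line u w := (u.1 == w.1) || (u.2 == w.2).

Definition line_dist u w := if u == w then 0 else if same_line u w then 2 else 1.

Definition line_resolving W :=
  forall u v, {in W, forall w, line_dist u w = line_dist v w} -> u = v.

Lemma gdist_tensor_complete u w : 2 < #|T| -> 2 < #|U| ->
  gdist (tensor_graph (fun x y : T => x != y) (fun x y : U => x != y)) u w
  = line_dist u w.
Proof.
move=> T_gt2 U_gt2; rewrite /gdist card_prod.
have -> : #|T| * #|U| = (#|T| * #|U| - 3).+3 by nia.
rewrite /= walk_of_length0 walk_of_length1 /line_dist /same_line /tensor_graph /=.
case: eqP => [//|u_neq_w].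
case: ifP => [/andP[/negbTE-> /negbTE->] //|]; rewrite -negb_or => /negbFE ->.
have [x /andP[x_u1 x_w1]] := exists_neq2 u.1 w.1 T_gt2.
have [y /andP[y_u2 y_w2]] := exists_neq2 u.2 w.2 U_gt2.
by rewrite (@walk_of_length2 _ _ _ (x, y)) //= ?x_w1 ?y_w2 // eq_sym x_u1 eq_sym y_u2.
Qed.

Lemma resolving_tensor_completeP W : 2 < #|T| -> 2 < #|U| ->
  reflect (line_resolving W)
    (resolving (tensor_graph (fun x y : T => x != y) (fun x y : U => x != y)) W).
Proof.
move=> T_gt2 U_gt2; rewrite /resolving.
apply: (iffP forallP) => [res u v eq_dist|res u].
  apply/eqP; move/forallP: (res u) => /(_ v) /implyP; apply.
  by apply/forall_inP => w Ww; rewrite !gdist_tensor_complete // eq_dist.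
apply/forallP => v; apply/implyP => /forall_inP eq_dist; apply/eqP/res => w Ww.
by have := eq_dist w Ww; rewrite !gdist_tensor_complete // => /eqP.
Qed.

Lemma line_resolving_mem_eq W u v : u \in W ->
  {in W, forall w, line_dist u w = line_dist v w} -> u = v.
Proof. by move=> uW /(_ u uW); rewrite /line_dist eqxx; case: eqP => // _; case: ifP. Qed.

End Grid.

Lemma line_dist_swap (T U : finType) (u w : T * U) :
  line_dist (u.2, u.1) (w.2, w.1) = line_dist u w.
Proof.
by case: u w => [a b] [c d]; rewrite /line_dist /same_line /= !xpair_eqE andbC orbC.
Qed.

Section Condition.
Variables (T U : finType) (W : {set T * U}).
Implicit Types (u v w x y : T * U) (r : T) (c : U).

Definition empty_row r := {in W, forall w, w.1 != r}.
Definition empty_col c := {in W, forall w, w.2 != c}.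
Definition lonely x := {in W, forall w, same_line w x -> w = x}.
Definition isolated x := x \in W /\ lonely x.

Definition grid_condition := [/\
  forall r r', empty_row r -> empty_row r' -> r = r',
  forall c c', empty_col c -> empty_col c' -> c = c',
  forall x y, isolated x -> isolated y -> x = y &
  forall x r c, isolated x -> empty_row r -> empty_col c -> False].

Lemma line_resolving_traces : line_resolving W <->
  forall u v, u \notin W -> v \notin W ->
    {in W, forall w, same_line u w = same_line v w} -> u = v.
Proof.
split=> [res u v uW vW eq_tr|res u v eq_dist].
  apply: res => w Ww; rewrite /line_dist eq_tr //.
  by case: eqP uW => [->|_]; case: eqP vW => [->|_]; rewrite ?Ww.
have [uW|uW] := boolP (u \in W); first exact: line_resolving_mem_eq eq_dist.
have [vW|vW] := boolP (v \in W).
  by apply/esym/(line_resolving_mem_eq vW) => w Ww; rewrite eq_dist.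
apply: res => // w Ww; have := eq_dist w Ww; rewrite /line_dist.
by case: eqP uW => [->|_]; case: eqP vW => [->|_]; rewrite ?Ww //; do 2 case: ifP.
Qed.

Lemma lonely_isolated_or_empty x :
  lonely x <-> isolated x \/ (empty_row x.1 /\ empty_col x.2).
Proof.
split=> [Lx|[[_ //]|[Er Ec] w Ww]].
  have [xW|xW] := boolP (x \in W); [by left|right].
  by split=> w Ww; apply: contraNneq xW => eq_w; rewrite -(Lx w) // /same_line eq_w eqxx ?orbT.
by rewrite /same_line (negbTE (Er w Ww)) (negbTE (Ec w Ww)).
Qed.

Lemma empty_rows_traces r1 r2 c : empty_row r1 -> empty_row r2 ->
  {in W, forall w, same_line (r1, c) w = same_line (r2, c) w}.
Proof.
move=> E1 E2 w Ww.
by rewrite /same_line /= !(eq_sym _ w.1) (negbTE (E1 w Ww)) (negbTE (E2 w Ww)).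
Qed.

Lemma empty_cols_traces r c1 c2 : empty_col c1 -> empty_col c2 ->
  {in W, forall w, same_line (r, c1) w = same_line (r, c2) w}.
Proof.
move=> E1 E2 w Ww.
by rewrite /same_line /= !(eq_sym _ w.2) (negbTE (E1 w Ww)) (negbTE (E2 w Ww)) !orbF.
Qed.

Lemma traces_empty_row r1 r2 c : (r1, c) \notin W -> r1 != r2 ->
  {in W, forall w, same_line (r1, c) w = same_line (r2, c) w} -> empty_row r1.
Proof.
move=> uW r12 eq_tr [a b] Wab; apply: contraNneq uW => /= a_r1.
have := eq_tr _ Wab; rewrite /same_line /= a_r1 eqxx [r2 == r1]eq_sym (negbTE r12).
by move=> /esym/eqP->; rewrite -a_r1.
Qed.

Lemma traces_empty_col r c1 c2 : (r, c1) \notin W -> c1 != c2 ->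
  {in W, forall w, same_line (r, c1) w = same_line (r, c2) w} -> empty_col c1.
Proof.
move=> uW c12 eq_tr [a b] Wab; apply: contraNneq uW => /= b_c1.
have := eq_tr _ Wab; rewrite /same_line /= b_c1 eqxx [c2 == c1]eq_sym (negbTE c12).
by rewrite orbT orbF => /esym/eqP->; rewrite -b_c1.
Qed.

Lemma cross_traces r1 r2 c1 c2 : r1 != r2 -> c1 != c2 ->
  {in W, forall w, same_line (r1, c1) w = same_line (r2, c2) w} <->
  lonely (r1, c2) /\ lonely (r2, c1).
Proof.
move=> r12 c12; rewrite /lonely /same_line; split=> [eq_tr|[Lx Ly] [a b] Wab].
  split=> -[a b] Wab /orP[] /eqP /= e; have := eq_tr _ Wab; rewrite /same_line /= e eqxx.
  - by rewrite [r2 == r1]eq_sym (negbTE r12) /= => /esym/eqP ->.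
  - by rewrite (negbTE c12) orbT orbF => /eqP ->.
  - by rewrite (negbTE r12) /= => /eqP ->.
  - by rewrite [c2 == c1]eq_sym (negbTE c12) orbT orbF => /esym/eqP ->.
have := Lx _ Wab; have := Ly _ Wab; rewrite /= ![_ == a]eq_sym ![_ == b]eq_sym.
case: (eqVneq a r1) => [->|a_r1]; case: (eqVneq b c1) => [->|b_c1] /=.
- by move=> _ /(_ isT) [/eqP]; rewrite (negbTE c12).
- by move=> _ /(_ isT) [->]; rewrite eqxx orbT.
- by rewrite orbT => /(_ isT) [->]; rewrite eqxx.
case: (eqVneq a r2) => [->|_] /=; first by move=> /(_ isT) [/eqP]; rewrite (negbTE b_c1).
by case: (eqVneq b c2) => [->|_] //= _ /(_ isT) [/eqP]; rewrite (negbTE a_r1).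
Qed.

Lemma lonely_notin r c c' : lonely (r, c') -> c != c' -> (r, c) \notin W.
Proof.
move=> L cc'; apply/negP => /L; rewrite /same_line eqxx => /(_ isT) [/eqP].
by rewrite (negbTE cc').
Qed.

Lemma line_resolving_grid_condition :
  0 < #|T| -> 0 < #|U| -> line_resolving W -> grid_condition.
Proof.
move=> /card_gt0P[r0 _] /card_gt0P[c0 _] /line_resolving_traces res.
have corner x y : x.1 != y.1 -> x.2 != y.2 -> lonely x -> lonely y -> False.
  case: x y => [r1 c2] [r2 c1] /= r12 c21 Lx Ly.
  have c12 : c1 != c2 by rewrite eq_sym.
  have := res (r1, c1) (r2, c2) (lonely_notin Lx c12) (lonely_notin Ly c21).
  by case/(_ (proj2 (cross_traces r12 c12) (conj Lx Ly))) => /eqP; rewrite (negbTE r12).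
split.
- move=> r r' Er Er'.
  have notW r'' : empty_row r'' -> (r'', c0) \notin W.
    by move=> E; apply/negP => /E; rewrite eqxx.
  by case: (res _ _ (notW _ Er) (notW _ Er') (empty_rows_traces c0 Er Er')).
- move=> c c' Ec Ec'.
  have notW c'' : empty_col c'' -> (r0, c'') \notin W.
    by move=> E; apply/negP => /E; rewrite eqxx.
  by case: (res _ _ (notW _ Ec) (notW _ Ec') (empty_cols_traces r0 Ec Ec')).
- move=> x y [xW Lx] [yW Ly].
  have [e1|n1] := eqVneq x.1 y.1; first by apply/esym/Lx; rewrite // /same_line e1 eqxx.
  have [e2|n2] := eqVneq x.2 y.2; first by apply/esym/Lx; rewrite // /same_line e2 eqxx orbT.
  by case: (corner x y n1 n2 Lx Ly).
- move=> x r c [xW Lx] Er Ec; apply: (corner x (r, c) (Er x xW) (Ec x xW) Lx).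
  by apply/lonely_isolated_or_empty; right.
Qed.

Lemma grid_condition_line_resolving : grid_condition -> line_resolving W.
Proof.
case=> rows cols isol isol_empty; apply/line_resolving_traces => -[r1 c1] [r2 c2].
have [<-|r12] := eqVneq r1 r2; have [<-|c12] := eqVneq c1 c2 => uW vW eq_tr //;
  have eq_tr' w (Ww : w \in W) := esym (eq_tr w Ww).
- have c21 : c2 != c1 by rewrite eq_sym.
  by rewrite (cols _ _ (traces_empty_col uW c12 eq_tr) (traces_empty_col vW c21 eq_tr')).
- have r21 : r2 != r1 by rewrite eq_sym.
  by rewrite (rows _ _ (traces_empty_row uW r12 eq_tr) (traces_empty_row vW r21 eq_tr')).
have [Lx Ly] := proj1 (cross_traces r12 c12) eq_tr.
have [Ix|[Ex1 Ex2]] := proj1 (lonely_isolated_or_empty _) Lx;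
  have [Iy|[Ey1 Ey2]] := proj1 (lonely_isolated_or_empty _) Ly.
- by case: (isol _ _ Ix Iy) => /eqP; rewrite (negbTE r12).
- by case: (isol_empty _ _ _ Ix Ey1 Ey2).
- by case: (isol_empty _ _ _ Iy Ex1 Ex2).
- by move: r12; rewrite [r1](rows _ _ Ex1 Ey1) eqxx.
Qed.

End Condition.

Section Fibres.
Variables (X J : finType) (p : X -> J) (W : {set X}).

Definition fibre_card j := #|[set x in W | p x == j]|.

Lemma fibre_card_eq0 j : fibre_card j = 0 -> {in W, forall x, p x != j}.
Proof.
move/eqP; rewrite cards_eq0 => /eqP fibre0 x Wx; apply/negP => pxj.
by have := in_set0 x; rewrite -fibre0 inE Wx pxj.
Qed.

Lemma fibre_card_eq1 x : x \in W -> fibre_card (p x) = 1 ->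
  {in W, forall y, p y == p x -> y = x}.
Proof.
move=> Wx /eqP/cards1P[z fibre1] y Wy pyx.
have : x \in [set z] by rewrite -fibre1 inE Wx eqxx.
have : y \in [set z] by rewrite -fibre1 inE Wy pyx.
by rewrite !inE => /eqP-> /eqP->.
Qed.

Lemma card_nonempty_fibres :
  2 * (#|J| - #|[set j | fibre_card j == 0]|)
  <= \sum_(x in W) (1 + (fibre_card (p x) == 1)).
Proof.
have -> : #|J| - #|[set j | fibre_card j == 0]| = #|[set j | 0 < fibre_card j]|.
  rewrite -(cardsC [set j | fibre_card j == 0]) addKn.
  by apply: eq_card => j; rewrite !inE lt0n.
rewrite -sum1_card big_distrr /= big_mkcond (partition_big p predT) //=.
apply: leq_sum => j _; rewrite inE.
rewrite (eq_bigr (fun=> 1 + (fibre_card j == 1))); last by move=> x /andP[_ /eqP->].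
rewrite (eq_bigl (mem [set x in W | p x == j])); last by move=> x; rewrite !inE.
by rewrite sum_nat_const -/(fibre_card j); case: (fibre_card j) => [|[|k]] //=; lia.
Qed.

End Fibres.

Lemma sum_incidences (X : finType) (W : {set X}) (a b : pred X) :
  \sum_(x in W) (1 + a x) + \sum_(x in W) (1 + b x)
  <= 3 * #|W| + #|[set x in W | a x && b x]|.
Proof.
have -> : #|[set x in W | a x && b x]| = \sum_(x in W) (a x && b x).
  rewrite -sum1_card big_mkcond [RHS]big_mkcond; apply: eq_bigr => x _.
  by rewrite inE; case: (x \in W).
rewrite -sum1_card big_distrr -!big_split /=; apply: leq_sum => x _.
by case: (a x); case: (b x).
Qed.

Lemma grid_condition_card (T U : finType) (W : {set T * U}) :
  grid_condition W -> 2 * (#|T| + #|U| - 2) <= 3 * #|W|.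
Proof.
case=> rows cols isol isol_empty.
set rc := fibre_card fst W; set cc := fibre_card snd W.
set Er := [set r | rc r == 0]; set Ec := [set c | cc c == 0].
set I := [set w in W | (rc w.1 == 1) && (cc w.2 == 1)].
have Er_empty r : r \in Er -> empty_row W r by rewrite inE => /eqP/fibre_card_eq0.
have Ec_empty c : c \in Ec -> empty_col W c by rewrite inE => /eqP/fibre_card_eq0.
have I_isolated w : w \in I -> isolated W w.
  rewrite inE => /and3P[Ww /eqP rc1 /eqP cc1]; split=> // w' Ww' /orP[].
  - exact: (fibre_card_eq1 Ww rc1 Ww').
  - exact: (fibre_card_eq1 Ww cc1 Ww').
have Er_le1 : #|Er| <= 1.
  by apply/card_le1_eqP => r r' /Er_empty Er1 /Er_empty Er2; apply: rows.
have Ec_le1 : #|Ec| <= 1.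
  by apply/card_le1_eqP => c c' /Ec_empty Ec1 /Ec_empty Ec2; apply: cols.
have I_le1 : #|I| <= 1.
  by apply/card_le1_eqP => w w' /I_isolated Iw /I_isolated Iw'; apply: isol.
have not_all : ~ (0 < #|Er| /\ 0 < #|Ec| /\ 0 < #|I|).
  case=> /card_gt0P[r /Er_empty Er1] [/card_gt0P[c /Ec_empty Ec1]].
  by case/card_gt0P=> w /I_isolated Iw; apply: isol_empty Iw Er1 Ec1.
have row_count := card_nonempty_fibres fst W.
have col_count := card_nonempty_fibres snd W.
have weights := sum_incidences W (fun w => rc w.1 == 1) (fun w => cc w.2 == 1).
rewrite -/rc -/cc -/Er -/Ec in row_count col_count; rewrite -/I in weights.
set S1 := \sum_(w in W) (1 + (rc w.1 == 1)) in weights row_count.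
set S2 := \sum_(w in W) (1 + (cc w.2 == 1)) in weights col_count.
lia.
Qed.

Section Extension.
Variables (T0 U0 T U : finType) (f : T0 -> T) (g : U0 -> U).
Variables (W0 : {set T0 * U0}) (E : {set T * U}).
Hypotheses (f_inj : injective f) (g_inj : injective g).
Hypothesis E_rows : forall r, r \notin codom f -> exists2 e, e \in E & e.1 = r.
Hypothesis E_cols : forall c, c \notin codom g -> exists2 e, e \in E & e.2 = c.
Hypothesis E_paired : {in E, forall e, exists2 e', e' \in E & (e' != e) && same_line e' e}.

Definition grid_map (w : T0 * U0) : T * U := (f w.1, g w.2).

Local Notation W := (grid_map @: W0 :|: E).

Lemma grid_map_inj : injective grid_map.
Proof. by case=> [a b] [c d] [/f_inj-> /g_inj->]. Qed.

Lemma grid_map_mem w : w \in W0 -> grid_map w \in W.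
Proof. by move=> Ww; rewrite inE imset_f. Qed.

Lemma empty_row_extend r : empty_row W r -> exists2 r0, r = f r0 & empty_row W0 r0.
Proof.
move=> Er; have [/codomP[r0 r_f]|/E_rows[e eE e_r]] := boolP (r \in codom f).
  exists r0 => // w Ww; rewrite r_f in Er.
  by apply: contra_neq (Er _ (grid_map_mem Ww)) => /= ->.
by have := Er e; rewrite inE eE orbT e_r eqxx => /(_ isT).
Qed.

Lemma empty_col_extend c : empty_col W c -> exists2 c0, c = g c0 & empty_col W0 c0.
Proof.
move=> Ec; have [/codomP[c0 c_g]|/E_cols[e eE e_c]] := boolP (c \in codom g).
  exists c0 => // w Ww; rewrite c_g in Ec.
  by apply: contra_neq (Ec _ (grid_map_mem Ww)) => /= ->.
by have := Ec e; rewrite inE eE orbT e_c eqxx => /(_ isT).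
Qed.

Lemma isolated_extend w : isolated W w -> exists2 w0, w = grid_map w0 & isolated W0 w0.
Proof.
case; rewrite inE => /orP[/imsetP[w0 W0w0 ->] Lw|wE Lw].
  exists w0 => //; split=> // w' Ww' same; apply/grid_map_inj/Lw; first exact: grid_map_mem.
  by move: same; rewrite /same_line /= => /orP[]/eqP->; rewrite eqxx ?orbT.
have [e' e'E /andP[e'_w same]] := E_paired wE.
by move: e'_w; rewrite (Lw e') ?eqxx // inE e'E orbT.
Qed.

Lemma grid_condition_extend : grid_condition W0 -> grid_condition W.
Proof.
case=> rows cols isol isol_empty; split.
- move=> r r' /empty_row_extend[r0 -> E0] /empty_row_extend[r0' -> E0'].
  by rewrite (rows _ _ E0 E0').
- move=> c c' /empty_col_extend[c0 -> E0] /empty_col_extend[c0' -> E0'].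
  by rewrite (cols _ _ E0 E0').
- move=> x y /isolated_extend[x0 -> I0] /isolated_extend[y0 -> I0'].
  by rewrite (isol _ _ I0 I0').
- move=> x r c /isolated_extend[x0 _ I0] /empty_row_extend[r0 _ E0].
  by case/empty_col_extend=> c0 _ E0'; apply: isol_empty I0 E0 E0'.
Qed.

End Extension.

(* Quantifying over all finite types of the given sizes lets the inductive
   steps work on subtypes of a grid. *)
Definition grid_resolvable m n k := forall T U : finType, #|T| = m -> #|U| = n ->
  exists2 W : {set T * U}, line_resolving W & #|W| <= k.

Lemma grid_resolvable_row n : grid_resolvable 1 n.+1 n.
Proof.
move=> T U T1 Un; have /card_gt0P[c _] : 0 < #|U| by rewrite Un.
exists (setX [set: T] [set~ c]); last by rewrite cardsX cardsT cardsC1 T1 Un mul1n.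
move=> u v eq_dist.
have [uc|/negPn/eqP uc] := boolP (u.2 != c).
  by apply: line_resolving_mem_eq eq_dist; rewrite !inE.
have [vc|/negPn/eqP vc] := boolP (v.2 != c).
  apply/esym/(line_resolving_mem_eq (W := setX [set: T] [set~ c])); first by rewrite !inE.
  by move=> w Ww; rewrite eq_dist.
have /fintype_le1P T_single : #|T| <= 1 by rewrite T1.
by case: u v uc vc {eq_dist} => [a b] [a' b'] /= -> ->; rewrite (T_single a a').
Qed.

Lemma grid_resolvable_swap m n k : grid_resolvable m n k -> grid_resolvable n m k.
Proof.
move=> res T U Tn Um; have [W resW cardW] := res U T Um Tn.
exists [set (w.2, w.1) | w in W]; last exact: leq_trans (leq_imset_card _ _) cardW.
move=> u v eq_dist; have : (u.2, u.1) = (v.2, v.1).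
  apply: resW => -[a b] Wab.
  have /= -> := line_dist_swap u (b, a); have /= -> := line_dist_swap v (b, a).
  apply: eq_dist.
  by apply/imsetP; exists (a, b).
by case: u v {eq_dist} => [a b] [c d] [-> ->].
Qed.

Lemma grid_resolvable_add_row m n k : 0 < m -> 0 < n ->
  grid_resolvable m n k -> grid_resolvable m.+1 n.+2 k.+2.
Proof.
move=> m_gt0 n_gt0 res T U Tm Un.
have /card_gt0P[t _] : 0 < #|T| by rewrite Tm.
have /card_gt0P[u1 _] : 0 < #|U| by rewrite Un.
have /card_gt0P[u2] : 0 < #|[set~ u1]| by rewrite cardsC1 Un.
rewrite !inE => u21.
have T0m : #|{: {x : T | x != t}}| = m by rewrite card_sig cardC1 Tm.
have U0n : #|{: {y : U | y \notin [set u1; u2]}}| = n.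
  rewrite card_sig (@eq_card _ _ (~: [set u1; u2])) => [|y]; last by rewrite !inE.
  by have := cardsC [set u1; u2]; rewrite cards2 eq_sym u21 Un; lia.
have [W0 resW0 cardW0] := res _ _ T0m U0n.
exists (grid_map val val @: W0 :|: [set (t, u1); (t, u2)]); last first.
  apply: leq_trans (leq_card_setU _ _) _; rewrite -addn2 leq_add //.
    exact: leq_trans (leq_imset_card _ _) cardW0.
  by rewrite cards2; case: (_ != _).
apply/grid_condition_line_resolving/(grid_condition_extend val_inj val_inj).
- move=> r rT0; exists (t, u1); rewrite ?inE ?eqxx //=; apply/eqP; rewrite eq_sym.
  by apply: contraNT rT0 => rt; apply/codomP; exists (exist _ r rt).
- move=> c cU0; exists (t, c) => //.
  have : c \in [set u1; u2].
    by apply: contraNT cU0 => cu; apply/codomP; exists (exist _ c cu).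
  by rewrite !inE !xpair_eqE eqxx.
- move=> e; rewrite !inE => /orP[]/eqP->; [exists (t, u2) | exists (t, u1)];
    by rewrite ?inE ?eqxx ?orbT // /same_line !xpair_eqE eqxx andbT // eq_sym.
apply: line_resolving_grid_condition resW0; by rewrite ?T0m ?U0n.
Qed.

Lemma grid_resolvable_add_col m n k : 0 < m -> 0 < n ->
  grid_resolvable m n k -> grid_resolvable m.+2 n.+1 k.+2.
Proof.
by move=> m_gt0 n_gt0 /grid_resolvable_swap/grid_resolvable_add_row res;
  apply/grid_resolvable_swap/res.
Qed.

Lemma grid_resolvable_dominoes a b j :
  grid_resolvable (a + b.*2).+1 (j + a.*2 + b).+1 (j + (a + b).*2).
Proof.
elim: a => [|a IHa].
  elim: b => [|b IHb]; first by rewrite addn0; exact: grid_resolvable_row.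
  by rewrite !(addSn, addnS, doubleS); apply: grid_resolvable_add_col IHb.
by rewrite !(addSn, addnS, doubleS); apply: grid_resolvable_add_row IHa.
Qed.

Lemma dominoes_decomposition m n : 3 <= m -> m <= n -> n <= 2 * m - 2 ->
  exists a b j, [/\ m = (a + b.*2).+1, n = (j + a.*2 + b).+1 &
    (2 * (m + n - 2) + 2) %/ 3 = j + (a + b).*2].
Proof.
(* j is forced: j + 2(m + n - 2 - j)/3 must be the ceiling, i.e. j = m + n - 2 mod 3. *)
move=> m_ge3 mn n_le; set j := (m + n + 1) %% 3.
exists ((2 * n - m - 1 - 2 * j) %/ 3), ((2 * m - n - 1 + j) %/ 3), j.
split; lia.
Qed.

Lemma metric_dim_le (T : finType) (e : rel T) (W : {set T}) :
  resolving e W -> metric_dim e <= #|W|.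
Proof. exact: (@Order.TotalTheory.bigmin_le_cond _ nat). Qed.

Lemma metric_dim_ge (T : finType) (e : rel T) k : k <= #|T| ->
  (forall W : {set T}, resolving e W -> k <= #|W|) -> k <= metric_dim e.
Proof. exact: (@Order.POrderTheory.le_bigmin _ nat). Qed.

Lemma grid_resolvable_optimal m n : 3 <= m -> m <= n -> n <= 2 * m - 2 ->
  grid_resolvable m n ((2 * (m + n - 2) + 2) %/ 3).
Proof.
move=> m_ge3 mn n_le; have [a [b [j [-> -> ->]]]] := dominoes_decomposition m_ge3 mn n_le.
exact: grid_resolvable_dominoes.
Qed.

Theorem proposition3p6 (m n : nat) :
  3 <= m -> m <= n -> n <= 2 * m - 2 ->
  metric_dim (tensor_graph (complete_graph m) (complete_graph n))
  = (2 * (m + n - 2) + 2) %/ 3.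
Proof.
move=> m_ge3 mn n_le.
have [m_gt2 n_gt2] : 2 < #|'I_m| /\ 2 < #|'I_n| by rewrite !card_ord; lia.
apply/eqP; rewrite eqn_leq; apply/andP; split.
  have [W resW cardW] := grid_resolvable_optimal m_ge3 mn n_le (card_ord m) (card_ord n).
  by apply/(leq_trans _ cardW)/metric_dim_le/resolving_tensor_completeP.
apply: metric_dim_ge => [|W /resolving_tensor_completeP res].
  by rewrite card_prod !card_ord; nia.
have [m_gt0 n_gt0] := (ltnW (ltnW m_gt2), ltnW (ltnW n_gt2)).
have := grid_condition_card (line_resolving_grid_condition m_gt0 n_gt0 (res m_gt2 n_gt2)).
by rewrite !card_ord; set s := #|W|; lia.
Qed.
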